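(* For all Hessenberg spaces $H$ and $H'$ of $n\times n$ matrices, $X_{H+H'}=X_H\cup X_{H'}$, where for a Hessenberg space $K$ we set $X_K=\{[g]\in GL_n(\mathbb{C})/B: g^{-1}E_{1n}g\in K\}$.
   Context: $B$ is the group of invertible upper-triangular $n\times n$ complex matrices; $[g]$ denotes the flag whose $k$-dimensional subspace is spanned by the first $k$ columns of $g$. $E_{kl}$ is the matrix unit with $1$ in entry $(k,l)$. A Hessenberg space is a subspace of the form $H_h=\operatorname{span}\{E_{kl}: k\le h(l)\}$ for a nondecreasing function $h:\{1,\dots,n\}\to\{0,1,\dots,n\}$; $H+H'$ is the subspace spanned by $H\cup H'$ (again a Hessenberg space, spanned by the matrix units lying in $H$ or $H'$). *)

From HB Require Import structures.
From mathcomp Require Import all_boot all_order all_algebra.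
From mathcomp Require Import complex.
From mathcomp Require Import reals.
Set Implicit Arguments. Unset Strict Implicit. Unset Printing Implicit Defensive.
Import Order.TTheory GRing.Theory Num.Theory.
Local Open Scope ring_scope.

Definition Cx (R : realType) : fieldType := (R[i])%C.

Section Hess.
Variable F : fieldType.
Variable n : nat.

(* Hessenberg function, 0-indexed columns: h j = h(j+1) in the paper. *)
Definition hess_fun (h : 'I_n -> nat) : Prop :=
  (forall j k : 'I_n, (j <= k)%N -> (h j <= h k)%N) /\ (forall j, (h j <= n)%N).

(* H_h = span{E_kl : k <= h(l)}: entry (i,j) (0-indexed) may be nonzero
   only if i+1 <= h(j), i.e. i < h j. *)
Definition hess_space (h : 'I_n -> nat) (M : 'M[F]_n) : Prop :=
  forall i j : 'I_n, ~~ (i < h j)%N -> M i j = 0.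

Definition space_sum (H H' : 'M[F]_n -> Prop) (M : 'M[F]_n) : Prop :=
  exists A B, H A /\ H' B /\ M = A + B.

(* The flag [g]: its k-th member (k = 0..n) is the span of the first k
   columns of g, represented (via transposition) as the canonical row space
   of the matrix whose first k rows are the first k columns of g. *)
Definition flag_of (g : 'M[F]_n) : 'I_n.+1 -> 'M[F]_n :=
  fun k => (<< \matrix_(i < n, j < n) (if (i < k)%N then g j i else 0) >>)%MS.

Definition X_set (E : 'M[F]_n) (K : 'M[F]_n -> Prop) (Fl : 'I_n.+1 -> 'M[F]_n) : Prop :=
  exists g : 'M[F]_n, g \in unitmx /\ flag_of g = Fl /\ K (invmx g *m E *m g).

End Hess.

From HB Require Import structures.
From mathcomp Require Import all_boot all_order all_algebra.
From mathcomp Require Import complex.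
From mathcomp Require Import reals.
Import Order.TTheory GRing.Theory.
Local Open Scope ring_scope.

(* The matrix g^-1 E_1n g = (column 1 of g^-1) (row n of g) has rank one, so
   its support is a rectangle S x T.  Membership in H_h + H_h' = H_{max h h'}
   means that every entry of S x T lies in H_h or in H_h'; since a
   Hessenberg function is nondecreasing, the complement of H_h is closed
   under moving down and left, so if the rectangle met the complements of
   both H_h and H_h', its lower-left corner (max S, min T) would lie outside
   both.  Hence the whole rectangle lies in H_h or in H_h'. *)

Section HessenbergSpaces.
Context {F : fieldType} {m : nat}.
Implicit Types (h : 'I_m -> nat) (M : 'M[F]_m).

Lemma hess_space0 h : hess_space h (0 : 'M[F]_m).
Proof. by move=> i j _; rewrite mxE. Qed.

Lemma hess_spaceP h M :
  reflect (hess_space h M) [forall i, forall j, (M i j != 0) ==> (i < h j)%N].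
Proof.
apply: (iffP forallP) => [HM i j | HM i].
  by apply: contraNeq => /(implyP (forallP (HM i) j)).
by apply/forallP => j; apply/implyP; apply: contraR => /HM ->.
Qed.

Lemma space_suml (H H' : 'M[F]_m -> Prop) M :
  H' 0 -> H M -> space_sum H H' M.
Proof. by move=> H'0 HM; exists M, 0; rewrite addr0. Qed.

Lemma space_sumr (H H' : 'M[F]_m -> Prop) M :
  H 0 -> H' M -> space_sum H H' M.
Proof. by move=> H0 H'M; exists 0, M; rewrite add0r. Qed.

Lemma space_sum_hess_space h h' M :
  space_sum (hess_space h) (hess_space h') M ->
  hess_space (fun j => maxn (h j) (h' j)) M.
Proof.
move=> [A [B [HA [HB ->]]]] i j.
by rewrite leq_max negb_or mxE => /andP[/HA -> /HB ->]; rewrite addr0.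
Qed.

Lemma mul_col_row_neq0 (u : 'cV[F]_m) (v : 'rV[F]_m) i j :
  ((u *m v) i j != 0) = (u i 0 != 0) && (v 0 j != 0).
Proof. by rewrite mxE big_ord1 mulf_eq0 negb_or. Qed.

Lemma hess_spacePn h M :
  ~ hess_space h M -> exists i j, M i j != 0 /\ (h j <= i)%N.
Proof.
move/(introN (hess_spaceP h M)); rewrite negb_forall; case/existsP => i.
rewrite negb_forall; case/existsP => j; rewrite negb_imply -leqNgt.
by case/andP; exists i, j.
Qed.

Lemma rank_one_hess_space_max {h h'} {u : 'cV[F]_m} {v : 'rV[F]_m} :
  {homo h : j k / (j <= k)%N} -> {homo h' : j k / (j <= k)%N} ->
  hess_space (fun j => maxn (h j) (h' j)) (u *m v) ->
  hess_space h (u *m v) \/ hess_space h' (u *m v).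
Proof.
move=> h_mono h'_mono Hmax.
case: (hess_spaceP h (u *m v)) => [|/hess_spacePn[i1 [j1 [nz1 out1]]]].
  by left.
case: (hess_spaceP h' (u *m v)) => [|/hess_spacePn[i2 [j2 [nz2 out2]]]].
  by right.
move: nz1 nz2; rewrite !mul_col_row_neq0 => /andP[u1 v1] /andP[u2 v2].
pose i := Order.max i1 i2; pose j := Order.min j1 j2.
have nz : (u *m v) i j != 0.
  rewrite mul_col_row_neq0 /i /j.
  by case: (leP i1 i2); case: (leP j1 j2); rewrite ?u1 ?u2 ?v1 ?v2.
have ii1 : (i1 <= i)%O by rewrite le_max lexx.
have ii2 : (i2 <= i)%O by rewrite le_max lexx orbT.
have jj1 : (j <= j1)%O by rewrite ge_min lexx.
have jj2 : (j <= j2)%O by rewrite ge_min lexx orbT.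
have corner_out : ~~ (i < maxn (h j) (h' j))%N.
  rewrite -leqNgt geq_max; apply/andP; split.
    exact: leq_trans (h_mono _ _ jj1) (leq_trans out1 ii1).
  exact: leq_trans (h'_mono _ _ jj2) (leq_trans out2 ii2).
by move: nz; rewrite Hmax ?eqxx.
Qed.

End HessenbergSpaces.

Lemma mulmx_delta_mx_col_row (R : pzSemiRingType) m n p q (P : 'M[R]_(m, n))
    (Q : 'M[R]_(p, q)) a b :
  P *m delta_mx a b *m Q = col a P *m row b Q.
Proof. by rewrite colE rowE mulmxA -(mulmxA P (delta_mx a 0)) mul_delta_mx. Qed.

Lemma X_set_mono (F : fieldType) n (E : 'M[F]_n) (K K' : 'M[F]_n -> Prop) Fl :
  (forall M, K M -> K' M) -> X_set E K Fl -> X_set E K' Fl.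
Proof.
by move=> KK' [g [g_unit [gFl HK]]]; exists g; split; [|split; [|apply: KK']].
Qed.

Theorem mainTheorem6 (R : realType) (n : nat) (h h' : 'I_n.+1 -> nat) :
  hess_fun h -> hess_fun h' ->
  forall Fl : 'I_n.+2 -> 'M[Cx R]_n.+1,
    X_set (delta_mx ord0 ord_max)
          (space_sum (hess_space h) (hess_space h')) Fl
    <-> X_set (delta_mx ord0 ord_max) (hess_space h) Fl
        \/ X_set (delta_mx ord0 ord_max) (hess_space h') Fl.
Proof.
move=> [h_mono _] [h'_mono _] Fl; split.
  move=> [g [g_unit [gFl /space_sum_hess_space]]].
  rewrite mulmx_delta_mx_col_row.
  case/(rank_one_hess_space_max h_mono h'_mono) => HK; [left | right];
    by exists g; rewrite mulmx_delta_mx_col_row.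
by case=> /X_set_mono; apply=> M;
  [apply: space_suml | apply: space_sumr]; apply: hess_space0.
Qed.
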